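(* Assume that $f_a(0)=\lim_{u\downarrow 0}f_a(u)=-\infty$ for every $a\in A$. Let $\theta\in\mathbb R^n$ and let $p^*\in\mathcal M_1^+(A)$ satisfy the variational principle with parameters $\theta$. Then $p^*_a>0$ for all $a\in A$.
   Context: Let $A$ be a finite or countable set and $\mathcal M_1^+(A)$ the set of probability distributions $p=(p_a)_{a\in A}$ on $A$. For each $a\in A$ let $h_a:[0,1]\to\mathbb R$ be continuous and strictly concave with $h_a(0)=h_a(1)=0$, differentiable on $(0,1)$ with $h_a'(u)=-f_a(u)$, where $f_a$ extends to a continuous (necessarily strictly increasing) function on $(0,1]$; put $f_a(0)=\lim_{u\downarrow0}f_a(u)\in[-\infty,\infty)$. The generalised entropy is $I(p)=\sum_{a\in A}h_a(p_a)\in[0,+\infty]$. Let $H_1,\dots,H_n:A\to\mathbb R$ be functions bounded from below, and write $\langle p,X\rangle=\sum_{a}p_aX(a)$. A distribution $p^*\in\mathcal M_1^+(A)$ satisfies the variational principle with parameters $\theta=(\theta_1,\dots,\theta_n)\in\mathbb R^n$ if $+\infty> I(p^* )-\sum_{j=1}^n\theta_j\langle p^*,H_j\rangle\ \ge\ I(p)-\sum_{j=1}^n\theta_j\langle p,H_j\rangle$ for all $p\in\mathcal M_1^+(A)$. *)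

From Stdlib Require Import Reals.
Open Scope R_scope.

(* The countable (finite or countably infinite) set A is encoded as the
   subset { a : nat | inA a = true } of nat. *)

Fixpoint fsum (n : nat) (g : nat -> R) : R :=
  match n with O => 0 | S k => fsum k g + g k end.

Definition is_distr (inA : nat -> bool) (p : nat -> R) : Prop :=
  (forall a, 0 <= p a) /\ (forall a, inA a = false -> p a = 0) /\
  infinite_sum p 1.

Definition entropy_is (inA : nat -> bool) (h : nat -> R -> R) (p : nat -> R)
  (v : R) : Prop :=
  infinite_sum (fun a => if inA a then h a (p a) else 0) v.

Definition mean_is (p : nat -> R) (X : nat -> R) (v : R) : Prop :=
  infinite_sum (fun a => p a * X a) v.

Definition objective_is (inA : nat -> bool) (h : nat -> R -> R) (n : nat)
  (H : nat -> nat -> R) (theta : nat -> R) (p : nat -> R) (v : R) : Prop :=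
  exists (i : R) (e : nat -> R),
    entropy_is inA h p i /\
    (forall j, (j < n)%nat -> mean_is p (H j) (e j)) /\
    v = i - fsum n (fun j => theta j * e j).

Definition variational_principle (inA : nat -> bool) (h : nat -> R -> R)
  (n : nat) (H : nat -> nat -> R) (theta : nat -> R) (pstar : nat -> R) : Prop :=
  is_distr inA pstar /\
  exists vstar, objective_is inA h n H theta pstar vstar /\
    forall p v, is_distr inA p -> objective_is inA h n H theta p v -> v <= vstar.

Definition strictly_concave_on01 (g : R -> R) : Prop :=
  forall x y t, 0 <= x <= 1 -> 0 <= y <= 1 -> x <> y -> 0 < t < 1 ->
    g (t * x + (1 - t) * y) > t * g x + (1 - t) * g y.

Definition entropy_data (inA : nat -> bool) (h f : nat -> R -> R) : Prop :=
  forall a, inA a = true ->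
    (forall x, 0 <= x <= 1 -> limit1_in (h a) (fun y => 0 <= y <= 1) (h a x) x) /\
    strictly_concave_on01 (h a) /\
    h a 0 = 0 /\ h a 1 = 0 /\
    (forall u, 0 < u < 1 -> derivable_pt_lim (h a) u (- f a u)) /\
    (forall x, 0 < x <= 1 -> limit1_in (f a) (fun y => 0 < y <= 1) (f a x) x).

Definition tends_to_minus_infty_at_0 (g : R -> R) : Prop :=
  forall M, exists delta, delta > 0 /\ forall u, 0 < u < delta -> g u < M.

From Stdlib Require Import Reals Lra Lia Classical.
Open Scope R_scope.

(* Suppose p*_{a0} = 0 for some a0 in A.  Since p* has total
   mass 1 there is a1 with p1 := p*_{a1} > 0.  Move a small mass e from a1
   to a0.  The objective changes by
       h_{a0}(e) + (h_{a1}(p1 - e) - h_{a1}(p1)) - e * C,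
   where C = sum_j theta_j (H_j(a0) - H_j(a1)).  By concavity of h_{a1}
   the middle term is at least e * K for a constant K (slope of a chord),
   while h_{a0}(e) > e * M for every M once e is small, because
   h_{a0}' = -f_{a0} tends to +infinity at 0.  Choosing M = C - K the
   perturbed distribution has a strictly larger objective, contradicting
   the variational principle. *)

Definition point_mass (a : nat) (c : R) : nat -> R :=
  fun k => if Nat.eqb k a then c else 0.

Lemma infinite_sum_plus (g d : nat -> R) (l m : R) :
  infinite_sum g l -> infinite_sum d m ->
  infinite_sum (fun k => g k + d k) (l + m).
Proof.
  intros Hg Hd eps Heps.
  destruct (CV_plus _ _ _ _ Hg Hd eps Heps) as [N HN].
  exists N; intros k Hk. rewrite plus_sum. now apply HN.
Qed.

Lemma infinite_sum_ext (g g' : nat -> R) (l : R) :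
  (forall k, g k = g' k) -> infinite_sum g l -> infinite_sum g' l.
Proof.
  intros Hext Hg eps Heps. destruct (Hg eps Heps) as [N HN].
  exists N; intros k Hk. rewrite <- (sum_eq g g'); auto.
Qed.

Lemma sum_point_mass (a : nat) (c : R) (N : nat) :
  (a <= N)%nat -> sum_f_R0 (point_mass a c) N = c.
Proof.
  induction N as [|N IH]; intros Ha.
  - assert (a = 0)%nat by lia. subst. reflexivity.
  - simpl. destruct (Nat.eq_dec a (S N)) as [-> | Hne].
    + rewrite (sum_eq _ (fun _ => 0)).
      * rewrite sum_cte. unfold point_mass. rewrite Nat.eqb_refl. ring.
      * intros i Hi. unfold point_mass.
        destruct (Nat.eqb_spec i (S N)); [lia | reflexivity].
    + rewrite IH by lia. unfold point_mass.
      destruct (Nat.eqb_spec (S N) a); [lia | ring].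
Qed.

Lemma infinite_sum_point_mass (a : nat) (c : R) :
  infinite_sum (point_mass a c) c.
Proof.
  intros eps Heps. exists a; intros k Hk.
  rewrite sum_point_mass by lia. unfold Rdist. rewrite Rminus_diag, Rabs_R0. lra.
Qed.

Lemma infinite_sum_two_points (g : nat -> R) (l : R) (a0 a1 : nat) (c0 c1 : R) :
  infinite_sum g l ->
  infinite_sum (fun k => g k + point_mass a0 c0 k + point_mass a1 c1 k) (l + c0 + c1).
Proof.
  intros Hg. apply infinite_sum_plus; [apply infinite_sum_plus|];
    auto using infinite_sum_point_mass.
Qed.

Lemma fsum_affine (n : nat) (th E D : nat -> R) (e : R) :
  fsum n (fun j => th j * (E j + e * D j)) =
  fsum n (fun j => th j * E j) + e * fsum n (fun j => th j * D j).
Proof. induction n as [|n IH]; simpl; [ring | rewrite IH; ring]. Qed.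

Lemma distr_has_positive_mass (inA : nat -> bool) (p : nat -> R) :
  is_distr inA p -> exists a, 0 < p a.
Proof.
  intros [Hnn [_ Hsum]]. apply NNPP; intro Hno.
  assert (Hzero : forall a, p a = 0).
  { intro a. destruct (Rlt_or_le 0 (p a)) as [Hpos|]; [|specialize (Hnn a); lra].
    exfalso. eauto. }
  assert (Hpart : forall N, sum_f_R0 p N = 0).
  { induction N as [|N IH]; simpl; rewrite ?IH, Hzero; ring. }
  destruct (Hsum (1/2)) as [N HN]; [lra|]. specialize (HN N (le_n N)).
  rewrite Hpart in HN. unfold Rdist in HN.
  rewrite Rminus_0_l, Rabs_Ropp, Rabs_R1 in HN. lra.
Qed.

Lemma distr_le_1 (inA : nat -> bool) (p : nat -> R) (a : nat) :
  is_distr inA p -> p a <= 1.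
Proof.
  intros [Hnn [_ Hsum]].
  assert (Hgrow : Un_growing (sum_f_R0 p)) by (intro k; simpl; specialize (Hnn (S k)); lra).
  assert (Hbound := growing_ineq _ _ Hgrow Hsum a).
  destruct a as [|k]; simpl in Hbound; [lra|].
  assert (0 <= sum_f_R0 p k) by (apply cond_pos_sum; auto). lra.
Qed.

Definition transfer (p : nat -> R) (a0 a1 : nat) (e : R) : nat -> R :=
  fun k => p k + point_mass a0 e k + point_mass a1 (- e) k.

Lemma transfer_is_distr (inA : nat -> bool) (p : nat -> R) (a0 a1 : nat) (e : R) :
  is_distr inA p -> inA a0 = true -> a0 <> a1 -> 0 <= e <= p a1 ->
  is_distr inA (transfer p a0 a1 e).
Proof.
  intros [Hnn [Hout Hsum]] Ha0 Hne He. split; [|split].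
  - intro k. specialize (Hnn k). unfold transfer, point_mass.
    destruct (Nat.eqb_spec k a0), (Nat.eqb_spec k a1); subst; lra.
  - intros k Hk. unfold transfer, point_mass.
    specialize (Hout k Hk).
    destruct (Nat.eqb_spec k a0), (Nat.eqb_spec k a1); subst; try congruence; lra.
  - replace 1 with (1 + e + - e) by ring. now apply infinite_sum_two_points.
Qed.

Lemma transfer_entropy (inA : nat -> bool) (h : nat -> R -> R) (p : nat -> R)
    (a0 a1 : nat) (e i : R) :
  entropy_is inA h p i -> inA a0 = true -> inA a1 = true -> a0 <> a1 ->
  entropy_is inA h (transfer p a0 a1 e)
    (i + (h a0 (p a0 + e) - h a0 (p a0)) + (h a1 (p a1 - e) - h a1 (p a1))).
Proof.
  intros Hent Ha0 Ha1 Hne.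
  apply (infinite_sum_ext (fun k => (if inA k then h k (p k) else 0)
           + point_mass a0 (h a0 (p a0 + e) - h a0 (p a0)) k
           + point_mass a1 (h a1 (p a1 - e) - h a1 (p a1)) k)).
  - intro k. unfold transfer, point_mass.
    destruct (Nat.eqb_spec k a0), (Nat.eqb_spec k a1); subst; try congruence.
    + rewrite Ha0, !Rplus_0_r. ring.
    + rewrite Ha1, Rplus_0_r. replace (p a1 + 0 + - e) with (p a1 - e) by ring. ring.
    + rewrite !Rplus_0_r. reflexivity.
  - now apply infinite_sum_two_points.
Qed.

Lemma transfer_mean (p X : nat -> R) (a0 a1 : nat) (e m : R) :
  mean_is p X m -> mean_is (transfer p a0 a1 e) X (m + e * (X a0 - X a1)).
Proof.
  intros Hmean. replace (m + e * (X a0 - X a1)) with (m + e * X a0 + - e * X a1) by ring.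
  apply (infinite_sum_ext (fun k => p k * X k + point_mass a0 (e * X a0) k
                                     + point_mass a1 (- e * X a1) k)).
  - intro k. unfold transfer, point_mass.
    destruct (Nat.eqb_spec k a0), (Nat.eqb_spec k a1); subst; ring.
  - now apply infinite_sum_two_points.
Qed.

Lemma transfer_objective (inA : nat -> bool) (h : nat -> R -> R) (n : nat)
    (H : nat -> nat -> R) (theta p : nat -> R) (a0 a1 : nat) (e v : R) :
  objective_is inA h n H theta p v -> inA a0 = true -> inA a1 = true -> a0 <> a1 ->
  objective_is inA h n H theta (transfer p a0 a1 e)
    (v + (h a0 (p a0 + e) - h a0 (p a0)) + (h a1 (p a1 - e) - h a1 (p a1))
       - e * fsum n (fun j => theta j * (H j a0 - H j a1))).
Proof.
  intros (i & m & Hent & Hmean & ->) Ha0 Ha1 Hne.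
  exists (i + (h a0 (p a0 + e) - h a0 (p a0)) + (h a1 (p a1 - e) - h a1 (p a1))),
         (fun j => m j + e * (H j a0 - H j a1)).
  split; [now apply transfer_entropy|split].
  - intros j Hj. apply transfer_mean, Hmean, Hj.
  - rewrite fsum_affine. ring.
Qed.

(* Chord bound: removing mass e < q/2 from q loses at most the slope of
   the chord over [q/2, q] times e. *)
Lemma concave_decrement_bound (g : R -> R) (q e : R) :
  strictly_concave_on01 g -> 0 < q <= 1 -> 0 < e < q / 2 ->
  g (q - e) - g q > e * ((2 / q) * (g (q / 2) - g q)).
Proof.
  intros Hconc Hq He. set (t := 2 * e / q).
  assert (Ht : 0 < t < 1).
  { unfold t. split; [apply Rdiv_lt_0_compat; lra|].
    apply (Rmult_lt_reg_r q); [lra|]. unfold Rdiv. rewrite Rmult_assoc, Rinv_l; lra. }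
  assert (Hchord := Hconc (q / 2) q t ltac:(lra) ltac:(lra) ltac:(lra) Ht).
  replace (t * (q / 2) + (1 - t) * q) with (q - e) in Hchord by (unfold t; field; lra).
  replace (e * ((2 / q) * (g (q / 2) - g q))) with (t * (g (q / 2) - g q))
    by (unfold t; field; lra).
  lra.
Qed.

Lemma concave_steep_at_zero (g f : R -> R) (M : R) :
  strictly_concave_on01 g -> g 0 = 0 ->
  (forall u, 0 < u < 1 -> derivable_pt_lim g u (- f u)) ->
  tends_to_minus_infty_at_0 f ->
  exists delta, delta > 0 /\ forall e, 0 < e < delta -> e < 1 -> g e > e * M.
Proof.
  intros Hconc Hg0 Hder Hinf. destruct (Hinf (- M)) as [delta [Hdelta Hsmall]].
  exists delta; split; [exact Hdelta|]. intros e He He1.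
  assert (Hhalf : g (e / 2) > g e / 2).
  { assert (Hmid := Hconc 0 e (1/2) ltac:(lra) ltac:(lra) ltac:(lra) ltac:(lra)).
    replace (1/2 * 0 + (1 - 1/2) * e) with (e / 2) in Hmid by field. lra. }
  destruct (MVT_cor2 g (fun u => - f u) (e / 2) e) as [c [Hmvt Hc]]; [lra| |].
  { intros c Hc. apply Hder. lra. }
  assert (Hfc : f c < - M) by (apply Hsmall; lra).
  assert (- f c * (e - e / 2) > M * (e - e / 2)) by (apply Rmult_gt_compat_r; lra).
  lra.
Qed.

Theorem mainTheorem1
  (inA : nat -> bool) (h f : nat -> R -> R) (n : nat)
  (H : nat -> nat -> R) (theta : nat -> R) (pstar : nat -> R) :
  entropy_data inA h f ->
  (forall j, (j < n)%nat -> exists c, forall a, inA a = true -> c <= H j a) ->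
  (forall a, inA a = true -> tends_to_minus_infty_at_0 (f a)) ->
  variational_principle inA h n H theta pstar ->
  forall a, inA a = true -> 0 < pstar a.
Proof.
  intros Hdata _ Hinf [Hdistr [vstar [Hobj Hmax]]] a0 Ha0.
  destruct (Rlt_or_le 0 (pstar a0)) as [|Hle]; [assumption | exfalso].
  assert (Hz : pstar a0 = 0) by (destruct Hdistr as [Hnn _]; specialize (Hnn a0); lra).
  destruct (distr_has_positive_mass _ _ Hdistr) as [a1 Hp1].
  assert (Ha1 : inA a1 = true).
  { destruct (inA a1) eqn:E; [reflexivity|].
    destruct Hdistr as [_ [Hout _]]. rewrite (Hout a1 E) in Hp1. lra. }
  assert (Hne : a0 <> a1) by (intros ->; lra).
  assert (Hp1le := distr_le_1 _ _ a1 Hdistr).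
  destruct (Hdata a0 Ha0) as (_ & Hconc0 & Hh0 & _ & Hder0 & _).
  destruct (Hdata a1 Ha1) as (_ & Hconc1 & _).
  set (K := (2 / pstar a1) * (h a1 (pstar a1 / 2) - h a1 (pstar a1))).
  set (C := fsum n (fun j => theta j * (H j a0 - H j a1))).
  destruct (concave_steep_at_zero _ _ (C - K) Hconc0 Hh0 Hder0 (Hinf a0 Ha0))
    as [delta [Hdelta Hsteep]].
  set (e := Rmin delta (Rmin (pstar a1 / 2) 1) / 2).
  assert (He : 0 < e < delta /\ e < pstar a1 / 2 /\ e < 1).
  { unfold e. pose proof (Rmin_l delta (Rmin (pstar a1 / 2) 1)).
    pose proof (Rmin_r delta (Rmin (pstar a1 / 2) 1)).
    pose proof (Rmin_l (pstar a1 / 2) 1). pose proof (Rmin_r (pstar a1 / 2) 1).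
    assert (0 < Rmin delta (Rmin (pstar a1 / 2) 1))
      by (apply Rmin_Rgt_r; split; [lra | apply Rmin_Rgt_r; lra]).
    lra. }
  assert (Hgain0 := Hsteep e ltac:(lra) ltac:(lra)).
  assert (Hgain1 := concave_decrement_bound _ (pstar a1) e Hconc1 ltac:(lra) ltac:(lra)).
  assert (Hbetter := Hmax _ _ (transfer_is_distr _ _ _ _ e Hdistr Ha0 Hne ltac:(lra))
                       (transfer_objective _ _ _ _ _ _ _ _ e _ Hobj Ha0 Ha1 Hne)).
  rewrite Hz, Rplus_0_l, Hh0 in Hbetter. fold C in Hbetter. fold K in Hgain1.
  nra.
Qed.
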